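(* Let $k\ge1$ and $[k+]=\{1,2,\ldots,k\}$. For every set $A$ with $\emptyset\neq A\subsetneq[k+]$ we have $d([k+])\ge d(A)$, and the inequality is strict for $k\neq3$.
   Context: For $A,B\subseteq\mathbb{N}=\{0,1,\ldots\}$, $A+B=\{a+b:a\in A,b\in B\}$. For a nonempty finite $C\subseteq\mathbb{N}$, $d(C)$ is the number of sets $B\subseteq\mathbb{N}$ such that $B+D=C$ for some $D\subseteq\mathbb{N}$. *)

From mathcomp Require Import all_boot all_order.
From mathcomp Require Import finmap.
Set Implicit Arguments. Unset Strict Implicit. Unset Printing Implicit Defensive.
Local Open Scope fset_scope.

Definition sumset (A B : {fset nat}) : {fset nat} :=
  [fset (a + b)%N | a in A, b in B].

(* Any B, D ⊆ ℕ with B + D = C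
   (C finite nonempty) are nonempty and contained in this segment, hence
   finite subsets of it; so this bounded search counts all such B. *)
Definition upto (C : {fset nat}) : {fset nat} :=
  [fset i | i in iota 0 (\max_(c <- C) c).+1].

Definition d (C : {fset nat}) : nat :=
  #|` [fset B in fpowerset (upto C) |
        has (fun D => sumset B D == C) (fpowerset (upto C))] |.

Definition kplus (k : nat) : {fset nat} := [fset i | i in iota 1 k].

From mathcomp Require Import all_boot all_order.
From mathcomp Require Import finmap zify.
Set Implicit Arguments. Unset Strict Implicit. Unset Printing Implicit Defensive.
Local Open Scope fset_scope.
Local Open Scope nat_scope.

(* Let T(n) = [seg_summands n] be the family of sets B containing 0 with
   B + [0, n - max B] = [0, n], and t(n) = |T(n)| = [seg_count n].  Each B in T(k-1) yields the two summands B and B + 1 of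
   [1, k], so d([k+]) >= 2 t(k-1).  Conversely, let a = min A.  A summand B of A
   has its minimum m at most a; translating B by -m and adding the points
   x <= max B - m with x + a outside A gives a set in T(k-a) from which B is
   recovered, so d(A) <= (a+1) t(k-a).  Sorting T(n+1) according to whether it
   contains 1 gives 3 t(n) <= 2 t(n+1), strictly for n <> 1, hence
   (j+2) t(n) <= 2 t(n+j).  Taking j = a - 1 compares the two bounds, with
   equality possible only for a = 2, k = 3; for a = 1 the bound is strict
   because the interval [0, h-1] is missed for any h in [k+] \ A. *)

Lemma cardfsM (K K' : choiceType) (A : {fset K}) (E : {fset K'}) :
  #|` A `*` E| = #|` A| * #|` E|.
Proof.
rewrite /fsetM; apply: etrans (perm_size (enum_imfset2 _ _)) _.
  by move=> [a b] [a' b'] _ _ /= [-> ->].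
by rewrite size_allpairs.
Qed.

Lemma leq_card_in_inj (K K' : choiceType) (X : {fset K}) (Y : {fset K'})
    (f : K -> K') :
  {in X, forall x, f x \in Y} -> {in X &, injective f} -> #|` X| <= #|` Y|.
Proof.
move=> fXY /card_in_imfsetP/eqP <-; apply: fsubset_leq_card.
by apply/fsubsetP => _ /imfsetP[x xX ->]; apply: fXY.
Qed.

Lemma leq_card_disjoint (K : choiceType) (X Y Z : {fset K}) :
  [disjoint X & Y] -> X `<=` Z -> Y `<=` Z -> #|` X| + #|` Y| <= #|` Z|.
Proof.
rewrite -fsetI_eq0 -cardfsUI => /eqP-> sXZ sYZ.
by rewrite cardfs0 addn0 fsubset_leq_card // fsubUset sXZ.
Qed.

Lemma in_fset_sep (K : choiceType) (X : {fset K}) (P : pred K) x :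
  (x \in [fset y in X | P y]) = (x \in X) && P x.
Proof. by rewrite !inE. Qed.

Definition fmax (B : {fset nat}) : nat := \max_(c <- B) c.
Definition fmin (B : {fset nat}) : nat := \big[minn/fmax B]_(c <- B) c.
Definition segment (m n : nat) : {fset nat} := [fset i | i in iota m n].

Lemma in_segment m n x : (x \in segment m n) = (m <= x < m + n).
Proof. by rewrite in_fset /= mem_iota. Qed.

Lemma card_segment m n : #|` segment m n| = n.
Proof. by rewrite card_fseq undup_id ?iota_uniq ?size_iota. Qed.

Lemma in_upto (C : {fset nat}) x : (x \in upto C) = (x <= fmax C).
Proof. exact: in_segment. Qed.

Lemma in_kplus k x : (x \in kplus k) = (0 < x <= k).
Proof. by rewrite [kplus k]/(segment 1 k) in_segment; lia. Qed.

Section Extrema.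
Implicit Types (B : {fset nat}) (x : nat).

Lemma leq_fmax B x : x \in B -> x <= fmax B.
Proof. by move=> xB; apply: leq_bigmax_seq. Qed.

Lemma fmax_leP B m : reflect {in B, forall x, x <= m} (fmax B <= m).
Proof.
by apply: (iffP (bigmax_leqP_seq _ _ _ _)) => [le_m x xB | le_m x xB _]; apply: le_m.
Qed.

Lemma fmax_mem B : B != fset0 -> fmax B \in B.
Proof.
case/fset0Pn=> x xB.
have : (fmax B == 0) || (fmax B \in B).
  rewrite /fmax big_seq; apply: (big_ind (fun m => (m == 0) || (m \in B))) => //.
  - by move=> m1 m2 ? ?; rewrite /maxn; case: ltnP.
  - by move=> y ->; rewrite orbT.
by case/orP=> [/eqP B0|//]; move: (leq_fmax xB); rewrite B0 leqn0 => /eqP <-.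
Qed.

Lemma fmax_eq B c : c \in B -> {in B, forall x, x <= c} -> fmax B = c.
Proof. by move=> cB /fmax_leP le_c; apply/eqP; rewrite eqn_leq le_c leq_fmax. Qed.

Lemma fmin_leq B x : x \in B -> fmin B <= x.
Proof.
rewrite /fmin; move: (fmax B); have -> : (x \in B) = (x \in enum_fset B) by [].
elim: (enum_fset B) => // y s IH i.
by rewrite inE big_cons geq_min => /predU1P[->|/IH->]; rewrite ?leqnn ?orbT.
Qed.

Lemma fmin_mem B : B != fset0 -> fmin B \in B.
Proof.
move=> B0; rewrite /fmin big_seq; elim/big_ind: _ => [|m1 m2 m1B m2B|//].
- exact: fmax_mem.
- by rewrite /minn; case: ltnP.
Qed.

End Extrema.

Lemma sumsetP (B D : {fset nat}) x :
  reflect (exists2 b, b \in B & exists2 e, e \in D & x = b + e) (x \in sumset B D).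
Proof. exact: imfset2P. Qed.

Definition summands (C : {fset nat}) : {fset {fset nat}} :=
  [fset B in fpowerset (upto C) | has (fun D => sumset B D == C) (fpowerset (upto C))].

Lemma dE (C : {fset nat}) : d C = #|` summands C|.
Proof. by []. Qed.

Lemma summandsP (C B : {fset nat}) :
  C != fset0 -> reflect (exists D, sumset B D = C) (B \in summands C).
Proof.
move=> C0; rewrite !inE /=; apply: (iffP andP) => [[_ /hasP[D _ /eqP BD]] | [D BD]].
  by exists D.
have [b bB [e eD _]] : exists2 b, b \in B & exists2 e, e \in D & fmin C = b + e.
  by apply/sumsetP; rewrite BD fmin_mem.
have le_fmax x y : x \in B -> y \in D -> x + y <= fmax C.
  by move=> xB yD; apply: leq_fmax; rewrite -BD; apply/sumsetP; exists x => //; exists y.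
split; last (apply/hasP; exists D; last by rewrite BD).
- rewrite fpowersetE; apply/fsubsetP => x xB; rewrite in_upto.
  exact: leq_trans (leq_addr e x) (le_fmax _ _ xB eD).
- rewrite fpowersetE; apply/fsubsetP => y yD; rewrite in_upto.
  exact: leq_trans (leq_addl b y) (le_fmax _ _ bB yD).
Qed.

Definition seg_summands (n : nat) : {fset {fset nat}} :=
  [fset B in fpowerset (segment 0 n.+1) |
     (0 \in B) && (sumset B (segment 0 (n - fmax B).+1) == segment 0 n.+1)].

Definition seg_count (n : nat) : nat := #|` seg_summands n|.

Lemma sumset_segment_cover (B : {fset nat}) n s :
  fmax B <= n ->
  (forall x, x <= n -> exists2 y, y \in B & y <= x <= y + (n - fmax B)) ->
  sumset B (segment s (n - fmax B).+1) = segment s n.+1.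
Proof.
move=> Bn cover; apply/fsetP => x; rewrite in_segment.
apply/sumsetP/idP => [[y /leq_fmax yB [e]] | /andP[sx xn]].
  by rewrite in_segment => e_in ->; lia.
have [y yB yx] := cover (x - s) ltac:(lia).
by exists y => //; exists (x - y); rewrite ?in_segment; lia.
Qed.

Lemma seg_summandsP n (B : {fset nat}) :
  reflect [/\ 0 \in B, fmax B <= n &
             forall x, x <= n -> exists2 y, y \in B & y <= x <= y + (n - fmax B)]
          (B \in seg_summands n).
Proof.
rewrite !inE fpowersetE /=.
apply: (iffP and3P) => [[/fsubsetP Bn B0 /eqP BD] | [B0 Bn cover]].
  split=> // [|x xn].
    by apply/fmax_leP => x /Bn; rewrite in_segment.
  have /sumsetP[y yB [e]] : x \in sumset B (segment 0 (n - fmax B).+1).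
    by rewrite BD in_segment.
  by rewrite in_segment => e_le ->; exists y => //; lia.
split=> //; last by apply/eqP; apply: sumset_segment_cover.
by apply/fsubsetP => x /leq_fmax xB; rewrite in_segment; lia.
Qed.

Lemma sumset_seg_summands n B s :
  B \in seg_summands n -> sumset B (segment s (n - fmax B).+1) = segment s n.+1.
Proof. by case/seg_summandsP=> _; apply: sumset_segment_cover. Qed.

Lemma fmax_segment j : fmax (segment 0 j.+1) = j.
Proof. by apply: fmax_eq => [|x]; rewrite in_segment; lia. Qed.

Lemma segment_seg_summands j n : j <= n -> segment 0 j.+1 \in seg_summands n.
Proof.
move=> jn; apply/seg_summandsP; rewrite fmax_segment in_segment; split=> // x xn.
by exists (minn x j); rewrite ?in_segment; lia.
Qed.

Lemma seg_summands_fmax n (B : {fset nat}) :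
  B \in seg_summands n -> fmax B = n -> B = segment 0 n.+1.
Proof.
case/seg_summandsP=> _ Bn cover Bmax; apply/fsetP => x; rewrite in_segment.
apply/idP/idP => [/leq_fmax | xn]; first by lia.
have [y yB] := cover x xn; rewrite Bmax subnn addn0 => /andP[yx xy].
by have <- : y = x by lia.
Qed.

Lemma seg_summandsS n : seg_summands n `<=` seg_summands n.+1.
Proof.
apply/fsubsetP => B /seg_summandsP[B0 Bn cover]; apply/seg_summandsP.
split=> [||x xn1] //; first by lia.
have [xn | ->] : x <= n \/ x = n.+1 by lia.
  by have [y yB yx] := cover x xn; exists y => //; lia.
by exists (fmax B); [apply: fmax_mem; apply/fset0Pn; exists 0 | lia].
Qed.

Lemma seg_count0 : seg_count 0 = 1.
Proof.
rewrite /seg_count -(cardfs1 (segment 0 1)); congr #|` _|; apply/fsetP => B.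
rewrite in_fset1; apply/idP/eqP => [BT | ->]; last exact: segment_seg_summands.
by case/seg_summandsP: (BT) => _ Bn _; apply: seg_summands_fmax BT _; lia.
Qed.

Lemma seg_count_gt0 n : 0 < seg_count n.
Proof.
by rewrite cardfs_gt0; apply/fset0Pn; exists (segment 0 1); apply: segment_seg_summands.
Qed.

Definition shift (B : {fset nat}) : {fset nat} := [fset x.+1 | x in B].
Definition shift0 (B : {fset nat}) : {fset nat} := 0 |` shift B.
Definition without1 (F : {fset {fset nat}}) : {fset {fset nat}} :=
  [fset B in F | 1 \notin B].

Lemma in_without1 (F : {fset {fset nat}}) (B : {fset nat}) :
  (B \in without1 F) = (B \in F) && (1 \notin B).
Proof. exact: in_fset_sep. Qed.

Lemma mem_shift (B : {fset nat}) x : (x.+1 \in shift B) = (x \in B).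
Proof. by rewrite mem_imfset //; move=> ? ? []. Qed.

Lemma zero_notin_shift (B : {fset nat}) : 0 \notin shift B.
Proof. by apply/imfsetP => -[]. Qed.

Lemma shift_inj : injective shift.
Proof.
by move=> B B' eqB; apply/fsetP => x; rewrite -[x \in B]mem_shift -[x \in B']mem_shift eqB.
Qed.

Lemma sumset_shift_segment B s L :
  sumset (shift B) (segment s L) = sumset B (segment s.+1 L).
Proof.
apply/fsetP => x; apply/sumsetP/sumsetP => -[y yB [e]]; rewrite in_segment => e_in ->.
  case/imfsetP: yB => z zB ->.
  by exists z => //; exists e.+1; rewrite ?in_segment; lia.
by exists y.+1; rewrite ?mem_shift //; exists e.-1; rewrite ?in_segment; lia.
Qed.

Lemma d_kplus_ge k : 0 < k -> 2 * seg_count k.-1 <= d (kplus k).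
Proof.
move=> k_gt0; set n := k.-1.
have kplusE : kplus k = segment 1 n.+1 by rewrite /n prednK.
have k0 : kplus k != fset0 by apply/fset0Pn; exists 1; rewrite in_kplus.
have card_shift : #|` shift @` seg_summands n| = seg_count n.
  by apply/eqP/card_in_imfsetP => B B' _ _; apply: shift_inj.
rewrite dE mul2n -addnn -{2}card_shift leq_card_disjoint //.
- apply/fdisjointP => B /seg_summandsP[B0 _ _]; apply/imfsetP => -[C _ BC].
  by move: B0; rewrite BC (negbTE (zero_notin_shift C)).
- apply/fsubsetP => B BT; apply/summandsP => //.
  by exists (segment 1 (n - fmax B).+1); rewrite kplusE sumset_seg_summands.
- apply/fsubsetP => _ /imfsetP[B BT ->]; apply/summandsP => //.
  exists (segment 0 (n - fmax B).+1).
  by rewrite sumset_shift_segment kplusE sumset_seg_summands.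
Qed.

Lemma mem_shift0 (B : {fset nat}) x : (x.+1 \in shift0 B) = (x \in B).
Proof. by rewrite in_fset1U mem_shift. Qed.

Lemma shift0_inj : injective shift0.
Proof.
move=> B B' eqB; apply/fsetP => x.
by rewrite -[x \in B]mem_shift0 -[x \in B']mem_shift0 eqB.
Qed.

Lemma fmax_shift0 (B : {fset nat}) : B != fset0 -> fmax (shift0 B) = (fmax B).+1.
Proof.
move=> B0; apply: fmax_eq => [|[|x]]; rewrite ?mem_shift0 ?fmax_mem //.
exact: leq_fmax.
Qed.

Lemma shift0_seg_summands n B :
  B \in seg_summands n -> shift0 B \in seg_summands n.+1.
Proof.
case/seg_summandsP=> B0 Bn cover; have nB : B != fset0 by apply/fset0Pn; exists 0.
apply/seg_summandsP; rewrite fmax_shift0 // subSS in_fset1U eqxx.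
split=> // -[|x] xn; first by exists 0; rewrite ?in_fset1U.
by have [y yB yx] := cover x xn; exists y.+1; rewrite ?mem_shift0.
Qed.

Lemma seg_count_shift0 n :
  seg_count n + #|` without1 (seg_summands n.+1)| <= seg_count n.+1.
Proof.
have card_img : #|` shift0 @` seg_summands n| = seg_count n.
  by apply/eqP/card_in_imfsetP => B B' _ _; apply: shift0_inj.
rewrite -card_img leq_card_disjoint //.
- apply/fdisjointP => _ /imfsetP[B /seg_summandsP[B0 _ _] ->].
  by rewrite in_without1 mem_shift0 B0 andbF.
- by apply/fsubsetP => _ /imfsetP[B BT ->]; apply: shift0_seg_summands.
- by apply/fsubsetP => B; rewrite in_without1 => /andP[].
Qed.

Lemma without1_seg_summandsS n :
  without1 (seg_summands n) `<=` without1 (seg_summands n.+1).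
Proof.
apply/fsubsetP => B; rewrite !in_without1 => /andP[BT ->]; rewrite andbT.
exact: (fsubsetP (seg_summandsS n)).
Qed.

Lemma card_without1_seg_summandsS n :
  #|` without1 (seg_summands n)| + (1 < n) <= #|` without1 (seg_summands n.+1)|.
Proof.
case: (ltnP 1 n) => [n_gt1 | _]; last first.
  by rewrite addn0 fsubset_leq_card // without1_seg_summandsS.
pose E := 0 |` segment 2 n.-1.
have in_E x : (x \in E) = (x == 0) || (1 < x <= n).
  by rewrite in_fset1U in_segment; congr (_ || _); lia.
have fmaxE : fmax E = n by apply: fmax_eq => [|x]; rewrite in_E; lia.
rewrite addn1; apply: fproper_ltn_card; rewrite fproperE without1_seg_summandsS /=.
apply/fsubsetPn; exists E; rewrite !in_without1 in_E /= andbT.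
  apply/seg_summandsP; rewrite fmaxE in_E; split=> // x xn.
  by exists (if x < 2 then 0 else minn x n); rewrite ?in_E; case: ltnP; lia.
apply/seg_summandsP => -[_ _ cover]; have [y] := cover 1 (ltnW n_gt1).
by rewrite fmaxE subnn addn0 in_E; lia.
Qed.

Lemma stretch_seg_summands n C :
  C \in seg_summands n -> 1 \in C -> C != segment 0 n.+1 ->
  shift0 (C `\ 0) \in without1 (seg_summands n.+1).
Proof.
move=> CT C1 Cfull; case/seg_summandsP: (CT) => C0 Cn cover.
have Cmax_lt : fmax C < n.
  rewrite ltn_neqAle Cn andbT; apply: contra Cfull => /eqP Cmax.
  by rewrite (seg_summands_fmax CT Cmax).
have C'max : fmax (C `\ 0) = fmax C.
  apply: fmax_eq => [|x]; rewrite in_fsetD1; last by case/andP => _ /leq_fmax.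
  by rewrite -lt0n (leq_trans _ (leq_fmax C1)) ?fmax_mem //; apply/fset0Pn; exists 0.
have C'0 : C `\ 0 != fset0 by apply/fset0Pn; exists 1; rewrite in_fsetD1.
rewrite in_without1 mem_shift0 fsetD11 andbT.
apply/seg_summandsP; rewrite fmax_shift0 // C'max subSS in_fset1U eqxx.
split=> [|| x xn]; [by [] | lia |].
have [x_le1 | ] := leqP x 1; first by exists 0; rewrite ?in_fset1U //; lia.
case: x xn => [|[|x]] // xn _.
have [[|y] yC yx] := cover x.+1 xn.
  by exists 2; rewrite ?mem_shift0 ?in_fsetD1 //; lia.
by exists y.+2; rewrite ?mem_shift0 ?in_fsetD1 //; lia.
Qed.

Lemma card_stretch_ltn n :
  #|` [fset C in seg_summands n | (1 \in C) && (C != segment 0 n.+1)]|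
    < #|` without1 (seg_summands n.+1)|.
Proof.
set W := without1 _.
apply: (@leq_ltn_trans #|` [fset D in W | 2 \in D]|).
  apply: (@leq_card_in_inj _ _ _ _ (fun C => shift0 (C `\ 0))).
    move=> C; rewrite in_fset_sep => /and3P[CT C1 Cfull].
    by rewrite in_fset_sep stretch_seg_summands // mem_shift0 in_fsetD1.
  move=> C C'; rewrite [C \in _]in_fset_sep [C' \in _]in_fset_sep.
  move=> /andP[/seg_summandsP[C0 _ _] _].
  move=> /andP[/seg_summandsP[C'0 _ _] _] /shift0_inj eqC.
  by rewrite -(fsetD1K C0) -(fsetD1K C'0) eqC.
apply: fproper_ltn_card; rewrite fproperE.
apply/andP; split; first by apply/fsubsetP => D; rewrite in_fset_sep => /andP[].
apply/fsubsetPn; exists (segment 0 1); last by rewrite in_fset_sep in_segment andbF.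
by rewrite in_without1 segment_seg_summands // in_segment.
Qed.

Lemma seg_count_le_without1 n :
  seg_count n + (1 < n) <= 2 * #|` without1 (seg_summands n.+1)|.
Proof.
have := card_stretch_ltn n; set Q := (X in #|` X| < _) => Qlt.
have cover : seg_summands n `<=` without1 (seg_summands n) `|` Q `|` [fset segment 0 n.+1].
  apply/fsubsetP => C CT; rewrite !in_fsetU in_without1 [C \in Q]in_fset_sep in_fset1 CT /=.
  by case: (1 \in C); case: (C == _).
have := fsubset_leq_card cover.
have := (leq_card_fsetU (without1 (seg_summands n) `|` Q) [fset segment 0 n.+1]).1.
have := (leq_card_fsetU (without1 (seg_summands n)) Q).1.
have := card_without1_seg_summandsS n.
rewrite cardfs1 /seg_count; lia.
Qed.

Lemma seg_count_ratio n : 3 * seg_count n + (n != 1) <= 2 * seg_count n.+1.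
Proof.
have := seg_count_shift0 n; have := seg_count_le_without1 n.
by case: n => [|n]; rewrite ?seg_count0; lia.
Qed.

Lemma seg_count_growth j n : 0 < j ->
  (j + 2) * seg_count n + ((1 < j) || (n != 1)) <= 2 * seg_count (n + j).
Proof.
elim: j => // -[_ _ | j IH _]; first by rewrite addn1 seg_count_ratio.
have := IH isT; have := seg_count_ratio (n + j.+1); have := seg_count_gt0 n.
rewrite !addnS; nia.
Qed.

Section UpperBound.
Variables (A : {fset nat}) (k : nat).
Local Notation a := (fmin A).

Definition top_summands : {fset {fset nat}} :=
  [fset C in seg_summands (k - a) | fmax C + a \in A].

Definition pad_summand (m : nat) (B : {fset nat}) : {fset nat} :=
  [fset x - m | x in B] `|` [fset x in segment 0 (fmax B - m).+1 | x + a \notin A].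

Lemma top_summands_sub : top_summands `<=` seg_summands (k - a).
Proof. by apply/fsubsetP => C; rewrite in_fset_sep => /andP[]. Qed.

Lemma card_top_summands_le : #|` top_summands| <= seg_count (k - a).
Proof. exact: fsubset_leq_card top_summands_sub. Qed.

Lemma card_top_summands_lt h :
  a <= h <= k -> h \notin A -> #|` top_summands| < seg_count (k - a).
Proof.
move=> ah hA; apply: fproper_ltn_card; rewrite fproperE top_summands_sub /=.
apply/fsubsetPn; exists (segment 0 (h - a).+1).
  by apply: segment_seg_summands; lia.
by rewrite in_fset_sep fmax_segment subnK ?(negbTE hA) ?andbF //; lia.
Qed.

Hypotheses (A0 : A != fset0) (Ak : {in A, forall x, x <= k}).

Lemma summand_fmin B D : sumset B D = A -> fmin B <= a /\ a - fmin B \in D.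
Proof.
move=> BD; have /sumsetP[b bB [e eD a_be]] : a \in sumset B D by rewrite BD fmin_mem.
have B0 : B != fset0 by apply/fset0Pn; exists b.
have a_le : a <= fmin B + e.
  apply: fmin_leq; rewrite -BD; apply/sumsetP.
  by exists (fmin B); [exact: fmin_mem | exists e].
have := fmin_leq bB; split; first lia.
by have -> : a - fmin B = e by lia.
Qed.

Section Summand.
Variables (B D : {fset nat}).
Hypothesis BD : sumset B D = A.
Local Notation m := (fmin B).

Let in_A x e : x \in B -> e \in D -> x + e \in A.
Proof. by move=> xB eD; rewrite -BD; apply/sumsetP; exists x => //; exists e. Qed.

Lemma in_pad_summand x :
  (x \in B) = [&& m <= x, x - m \in pad_summand m B & x - m + a \in A].
Proof.
have [m_le am_in] := summand_fmin BD.
apply/idP/and3P => [xB | [mx /fsetUP[/imfsetP[z zB xz] | pad_x] xA]].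
- split; first exact: fmin_leq.
    by apply/fsetUP; left; apply/imfsetP; exists x.
  have -> : x - m + a = x + (a - m) by have := fmin_leq xB; lia.
  exact: in_A.
- have {}zB : z \in B by [].
  by have -> : x = z by have := fmin_leq zB; lia.
- by move: pad_x; rewrite in_fset_sep xA andbF.
Qed.

Lemma pad_summand_top : pad_summand m B \in top_summands.
Proof.
have [m_le am_in] := summand_fmin BD.
have /sumsetP[b0 b0B _] : a \in sumset B D by rewrite BD fmin_mem.
have B0 : B != fset0 by apply/fset0Pn; exists b0.
have mB := fmin_mem B0; have bB := fmax_mem B0; set b := fmax B in bB *.
have Bmb x : x \in B -> m <= x <= b by move=> xB; rewrite fmin_leq ?leq_fmax.
have Dk e : e \in D -> b + e <= k by move=> eD; apply/Ak/in_A.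
have Da e : e \in D -> a <= m + e by move=> eD; apply/fmin_leq/in_A.
have in_pad x : x \in B -> x - m \in pad_summand m B.
  by move=> xB; apply/fsetUP; left; apply/imfsetP; exists x.
have fmax_pad : fmax (pad_summand m B) = b - m.
  apply: fmax_eq => [|y]; first exact: in_pad.
  case/fsetUP => [/imfsetP[x /Bmb xB ->] | ]; first lia.
  by rewrite in_fset_sep in_segment => /andP[].
have Dam := Dk _ am_in; have Bb := Bmb _ bB.
rewrite in_fset_sep fmax_pad; apply/andP; split; last first.
  have -> : b - m + a = b + (a - m) by lia.
  exact: in_A.
apply/seg_summandsP; rewrite fmax_pad; split=> [||x xk]; first by rewrite -(subnn m) in_pad.
  by lia.
have [bx | xb] := ltnP (b - m) x; first by exists (b - m); [exact: in_pad | lia].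
case xA: (x + a \in A).
  have /sumsetP[y yB [e eD xae]] : x + a \in sumset B D by rewrite BD.
  by exists (y - m); [exact: in_pad | have := Dk _ eD; have := Da _ eD; have := Bmb _ yB; lia].
exists x; last by lia.
by apply/fsetUP; right; rewrite in_fset_sep in_segment xA andbT; lia.
Qed.

End Summand.

Lemma d_le_top_summands : d A <= a.+1 * #|` top_summands|.
Proof.
rewrite dE -(card_segment 0 a.+1) -cardfsM.
apply: (@leq_card_in_inj _ _ _ _ (fun B => (fmin B, pad_summand (fmin B) B))).
  move=> B /(summandsP _ A0)[D BD]; rewrite in_fsetM /= in_segment (pad_summand_top BD) andbT.
  by have [] := summand_fmin BD; lia.
move=> B B' /(summandsP _ A0)[D BD] /(summandsP _ A0)[D' B'D'] [eq_m eq_pad].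
by apply/fsetP => x; rewrite (in_pad_summand BD) (in_pad_summand B'D') eq_pad eq_m.
Qed.

End UpperBound.

Theorem mainTheorem9 (k : nat) (A : {fset nat}) :
  (1 <= k)%N -> A != fset0 -> A `<` kplus k ->
  (d A <= d (kplus k))%N /\ (k != 3 -> (d A < d (kplus k))%N).
Proof.
move=> k_gt0 A0 ltAk.
have Ak x : x \in A -> 0 < x <= k.
  by move/(fsubsetP (fproper_sub ltAk)); rewrite in_kplus.
have Ak' : {in A, forall x, x <= k} by move=> x /Ak /andP[].
have /andP[a_gt0 a_le_k] := Ak _ (fmin_mem A0).
have ub := d_le_top_summands A0 Ak'; have lb := d_kplus_ge k_gt0.
have [a_gt1 | a_le1] := ltnP 1 (fmin A).
  have growth := @seg_count_growth (fmin A).-1 (k - fmin A) ltac:(lia).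
  have e1 : k - fmin A + (fmin A).-1 = k.-1 by lia.
  have e2 : (fmin A).-1 + 2 = (fmin A).+1 by lia.
  rewrite e1 e2 in growth.
  have := leq_mul (leqnn (fmin A).+1) (card_top_summands_le A k).
  by split=> [|k3]; lia.
have a1 : fmin A = 1 by lia.
have [h hk hA] : exists2 h, h \in kplus k & h \notin A.
  by apply/fsubsetPn; move: ltAk; rewrite fproperE => /andP[].
have := @card_top_summands_lt A k h; rewrite a1 subn1 -in_kplus => /(_ hk hA).
by rewrite a1 in ub; split=> [|_]; lia.
Qed.
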